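(* Let $\mathbb{F}$ be a field, $n\ge2$ an integer and $h$ an integer with $0\le h\le n-2$. Then there exists a unital $\mathbb{F}$-algebra $\mathcal{A}$ with $\dim\mathcal{A}=n$ and $l(\mathcal{A})=2^h$.
   Context: Algebras are finite-dimensional, unital, not necessarily associative. For a finite generating set $S$ of $\mathcal{A}$, a word in $S$ is any product (with any bracketing) of finitely many elements of $S$; its length is the number of factors, and $1$ is a word of length $0$. $L_i(S)$ is the linear span of all words in $S$ of length at most $i$. The length of $S$ is $l(S)=\min\{k\ge0: L_k(S)=\mathcal{A}\}$, and $l(\mathcal{A})=\max\{l(S): S\text{ a finite generating set of }\mathcal{A}\}$. *)

From HB Require Import structures.
From mathcomp Require Import all_boot all_order all_algebra.
Set Implicit Arguments. Unset Strict Implicit. Unset Printing Implicit Defensive.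
Import GRing.Theory.
Local Open Scope ring_scope.

(* A (not necessarily associative) n-dimensional F-algebra is modelled on the
   carrier 'rV[F]_n (every n-dim F-vector space is isomorphic to it) with a
   bilinear multiplication [mul] and a two-sided unit [e]. *)
Section NonAssocAlg.
Variables (F : fieldType) (n : nat).
Local Notation V := 'rV[F]_n.

Definition bilinear_mul (mul : V -> V -> V) : Prop :=
  (forall (a : F) (x y z : V), mul (a *: x + y) z = a *: mul x z + mul y z) /\
  (forall (a : F) (x y z : V), mul z (a *: x + y) = a *: mul z x + mul z y).

Definition is_unit_elt (mul : V -> V -> V) (e : V) : Prop :=
  forall x : V, mul e x = x /\ mul x e = x.

(* words_upto mul e S k = [:: W_0; W_1; ...; W_k] where W_i is the list of
   all words in S of length exactly i (all bracketings):
   W_0 = [:: e], W_1 = S, W_k = { u * v | u in W_i, v in W_(k-i), 1 <= i < k }. *)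
Fixpoint words_upto (mul : V -> V -> V) (e : V) (S : seq V) (k : nat)
  : seq (seq V) :=
  match k with
  | 0 => [:: [:: e]]
  | k'.+1 =>
      let ws := words_upto mul e S k' in
      rcons ws
        (if k' is 0 then S
         else flatten [seq [seq mul u v | u <- nth [::] ws i,
                                          v <- nth [::] ws (k'.+1 - i)]
                      | i <- iota 1 k'])
  end.

Definition Lspace (mul : V -> V -> V) (e : V) (S : seq V) (k : nat)
  : {vspace V} :=
  <<flatten (words_upto mul e S k)>>%VS.

Definition set_length (mul : V -> V -> V) (e : V) (S : seq V) (k : nat)
  : Prop :=
  Lspace mul e S k = fullv /\ (forall j : nat, (j < k)%N -> Lspace mul e S j <> fullv).

End NonAssocAlg.

From HB Require Import structures.
From mathcomp Require Import all_boot all_order all_algebra.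
From mathcomp Require Import ring zify.
Set Implicit Arguments. Unset Strict Implicit. Unset Printing Implicit Defensive.
Import GRing.Theory.
Local Open Scope ring_scope.

(* Take the algebra with basis e_0 = 1, e_1, ..., e_(n-1) in which e_i * e_i = e_(i+1)
   for 1 <= i <= h and all other products of the e_i with i >= 1 vanish.
   For any generating set S, L_1(S) + span(e_2, ..., e_(h+1)) is closed under
   multiplication, hence everything; so L_1(S) contains some t congruent to e_1
   modulo span(e_2, ..., e_(h+1)), and its repeated squares, of lengths 2^i, are
   e_(i+1) plus higher terms, which gives span(e_2, ..., e_(h+1)) <= L_(2^h)(S)
   by triangularity: l(S) <= 2^h. Conversely, for S = {e_1, e_(h+2), ..., e_(n-1)}
   a word reaches the coordinate e_(p+1) only if it has at least 2^p letters, so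
   e_(h+1) is not in L_j(S) for j < 2^h. *)

Lemma span_ind (K : fieldType) (vT : vectType K) (X : seq vT) (P : vT -> Prop) :
  P 0 -> (forall a x y, P x -> P y -> P (a *: x + y)) -> (forall x, x \in X -> P x) ->
  forall v, v \in <<X>>%VS -> P v.
Proof.
move=> P0 PC PX v Xv.
rewrite (@coord_span _ _ _ (in_tuple X) _ Xv).
apply: big_ind => // [x y Px Py|i _]; first by rewrite -[x]scale1r; apply: PC.
by rewrite -[_ *: _]addr0; apply: PC => //; apply/PX/mem_nth.
Qed.

Section Words.
Variables (F : fieldType) (n : nat).
Local Notation V := 'rV[F]_n.
Variables (mul : V -> V -> V) (e : V) (S : seq V).

Definition words i := nth [::] (words_upto mul e S i) i.

Lemma words_uptoE k : words_upto mul e S k = map words (iota 0 k.+1).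
Proof.
elim: k => [//|k IHk].
have size_ws : size (words_upto mul e S k) = k.+1 by rewrite IHk size_map size_iota.
have -> : iota 0 k.+2 = rcons (iota 0 k.+1) k.+1 by rewrite -cats1 -addn1 iotaD.
by rewrite map_rcons -IHk /words /= nth_rcons size_ws ltnn eqxx.
Qed.

Lemma words0 : words 0 = [:: e].
Proof. by []. Qed.

Lemma words1 : words 1 = S.
Proof. by []. Qed.

Lemma wordsSS k :
  words k.+2 = flatten [seq [seq mul u v | u <- words i, v <- words (k.+2 - i)]
                       | i <- iota 1 k.+1].
Proof.
have -> : words k.+2 = nth [::] (rcons (words_upto mul e S k.+1)
    (flatten [seq [seq mul u v | u <- nth [::] (words_upto mul e S k.+1) i,
                                 v <- nth [::] (words_upto mul e S k.+1) (k.+2 - i)]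
             | i <- iota 1 k.+1])) k.+2 by [].
rewrite nth_rcons words_uptoE size_map size_iota ltnn eqxx.
congr flatten; apply/eq_in_map => i; rewrite mem_iota => /andP[i_gt0 i_lt].
by rewrite !(nth_map 0) ?size_iota ?nth_iota //; lia.
Qed.

Lemma words_mul i j u v : (0 < i)%N -> (0 < j)%N ->
  u \in words i -> v \in words j -> mul u v \in words (i + j).
Proof.
move=> i_gt0 j_gt0 ui vj.
have [k ijk] : exists k, (i + j = k.+2)%N by exists (i + j - 2)%N; lia.
rewrite ijk wordsSS; apply/flatten_mapP; exists i; first by rewrite mem_iota; lia.
have -> : (k.+2 - i = j)%N by lia.
exact: allpairs_f.
Qed.

Lemma words_ind (Q : nat -> V -> Prop) :
  Q 0%N e -> (forall s, s \in S -> Q 1%N s) ->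
  (forall i j u v, (0 < i)%N -> (0 < j)%N -> Q i u -> Q j v -> Q (i + j)%N (mul u v)) ->
  forall k w, w \in words k -> Q k w.
Proof.
move=> Q0 Q1 Qmul k; elim/ltn_ind: k => -[|[|k]] IHk w.
- by rewrite words0 inE => /eqP->.
- by rewrite words1; apply: Q1.
rewrite wordsSS => /flatten_mapP[i]; rewrite mem_iota => /andP[i_gt0 i_lt].
case/allpairsP=> -[u v] [/= ui vj ->].
have -> : (k.+2 = i + (k.+2 - i))%N by lia.
by apply: Qmul; try lia; apply: IHk => //; lia.
Qed.

Lemma LspaceE k : Lspace mul e S k = <<flatten (map words (iota 0 k.+1))>>%VS.
Proof. by rewrite /Lspace words_uptoE. Qed.

Lemma words_Lspace i k w : (i <= k)%N -> w \in words i -> w \in Lspace mul e S k.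
Proof.
move=> le_ik wi; rewrite LspaceE memv_span //; apply/flatten_mapP; exists i => //.
by rewrite mem_iota; lia.
Qed.

Lemma Lspace_subv k (U : {vspace V}) :
  (forall i w, (i <= k)%N -> w \in words i -> w \in U) -> (Lspace mul e S k <= U)%VS.
Proof.
move=> wordsU; rewrite LspaceE; apply/span_subvP => w /flatten_mapP[i].
by rewrite mem_iota => ik; apply: wordsU; lia.
Qed.

Lemma Lspace_monotone j k : (j <= k)%N -> (Lspace mul e S j <= Lspace mul e S k)%VS.
Proof. by move=> le_jk; apply: Lspace_subv => i w ij; apply: words_Lspace; lia. Qed.

Lemma Lspace_closed_subv k (U : {vspace V}) :
  e \in U -> {subset S <= U} -> (forall u v, u \in U -> v \in U -> mul u v \in U) ->
  (Lspace mul e S k <= U)%VS.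
Proof.
move=> eU SU mulU; apply: Lspace_subv => i w _.
by apply: (words_ind (Q := fun _ w => w \in U)) => // *; apply: mulU.
Qed.

Lemma set_length_leq k m :
  set_length mul e S k -> Lspace mul e S m = fullv -> (k <= m)%N.
Proof. by case=> _ Lj_ne Lm; rewrite leqNgt; apply/negP => /Lj_ne. Qed.

Hypothesis mul_bil : bilinear_mul mul.
Hypothesis e_unit : is_unit_elt mul e.

Lemma mul0v y : mul 0 y = 0.
Proof.
have := mul_bil.1 1 0 0 y; rewrite !scale1r addr0 => h.
by apply: (@addIr _ (mul 0 y)); rewrite add0r -h.
Qed.

Lemma mulv0 y : mul y 0 = 0.
Proof.
have := mul_bil.2 1 0 0 y; rewrite !scale1r addr0 => h.
by apply: (@addIr _ (mul y 0)); rewrite add0r -h.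
Qed.

Lemma Lspace_mul i j x y : x \in Lspace mul e S i -> y \in Lspace mul e S j ->
  mul x y \in Lspace mul e S (i + j).
Proof.
rewrite {1}LspaceE => xi yj; move: x xi; apply: span_ind.
- by rewrite mul0v rpred0.
- by move=> a x1 x2 h1 h2; rewrite mul_bil.1 memvD ?memvZ.
move=> u /flatten_mapP[a]; rewrite mem_iota => ai ua.
rewrite LspaceE in yj; move: y yj; apply: span_ind.
- by rewrite mulv0 rpred0.
- by move=> c y1 y2 h1 h2; rewrite mul_bil.2 memvD ?memvZ.
move=> v /flatten_mapP[b]; rewrite mem_iota => bj vb.
case: a ai ua => [|a] ai ua.
  by move: ua; rewrite words0 inE => /eqP->; rewrite (e_unit v).1 (words_Lspace _ vb); lia.
case: b bj vb => [|b] bj vb.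
  by move: vb; rewrite words0 inE => /eqP->; rewrite (e_unit u).2 (words_Lspace _ ua); lia.
by apply: (words_Lspace (i := (a.+1 + b.+1)%N)); [lia | apply: words_mul].
Qed.

End Words.

Section ShiftAlgebra.
Variables (F : fieldType) (n h : nat).
Hypothesis le_hn : (h <= n)%N.
Local Notation N := n.+2.
Local Notation V := 'rV[F]_N.

Definition unitv : V := delta_mx 0 ord0.
Definition basisv (j : nat) : V := delta_mx 0 (inord j).

Definition square_shift (x y : V) : V :=
  \row_j (if (2 <= j <= h.+1)%N then x 0 (inord j.-1) * y 0 (inord j.-1) else 0).

(* With e_j := basisv j and x = x_0 e_0 + x', y = y_0 e_0 + y', this is
   x_0 y_0 e_0 + x_0 y' + y_0 x' + square_shift x y: e_0 is the unit, and the
   only nonzero products e_i * e_j with i, j >= 1 are e_i * e_i = e_(i+1) for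
   1 <= i <= h. *)
Definition shift_mul (x y : V) : V :=
  x 0 ord0 *: y + y 0 ord0 *: x - (x 0 ord0 * y 0 ord0) *: unitv + square_shift x y.

Lemma unitvE (k : 'I_N) : unitv 0 k = (k == 0 :> nat)%:R.
Proof. by rewrite mxE eqxx -val_eqE. Qed.

Lemma basisvE a (k : 'I_N) : (a < N)%N -> basisv a 0 k = (k == a :> nat)%:R.
Proof. by move=> aN; rewrite mxE eqxx -val_eqE /= inordK. Qed.

Lemma shift_mul_bilinear : bilinear_mul shift_mul.
Proof.
by split=> a x y z; apply/rowP => j; rewrite !mxE; case: ifP => _; ring.
Qed.

Lemma square_shift_unitv (x : V) : square_shift unitv x = 0 /\ square_shift x unitv = 0.
Proof.
split; apply/rowP => j; rewrite mxE [RHS]mxE; case: ifP => // j_range;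
  rewrite unitvE inordK; try lia.
all: rewrite (_ : (j.-1 == 0)%N = false) ?mul0r ?mulr0 //; lia.
Qed.

Lemma shift_mul_unit : is_unit_elt shift_mul unitv.
Proof.
move=> x; have [sx xs] := square_shift_unitv x.
by rewrite /shift_mul sx xs unitvE /= scale1r mul1r mulr1 !addr0 addrK addrC addKr.
Qed.

Lemma shift_mul_augmentation (x y : V) : x 0 ord0 = 0 -> y 0 ord0 = 0 ->
  shift_mul x y = square_shift x y.
Proof. by move=> x0 y0; rewrite /shift_mul x0 y0 mul0r !scale0r !addr0 subr0 add0r. Qed.

Definition supp lo hi (v : V) := forall j : 'I_N, ~~ (lo <= j <= hi)%N -> v 0 j = 0.

Definition shift_span : {vspace V} := <<[seq basisv j | j <- iota 2 h]>>%VS.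

Lemma shift_spanP v : reflect (supp 2 h.+1 v) (v \in shift_span).
Proof.
apply: (iffP idP); last first.
  move=> v_supp; rewrite (row_sum_delta v); apply: rpred_sum => j _.
  have [j_range | j_out] := boolP (2 <= j <= h.+1)%N; last first.
    by rewrite v_supp // scale0r rpred0.
  rewrite memvZ // memv_span //; apply/mapP; exists (nat_of_ord j).
    by rewrite mem_iota; lia.
  by rewrite /basisv inord_val.
move: v; apply: span_ind => [j _|a x y x_supp y_supp j j_out|].
- by rewrite mxE.
- by rewrite !mxE x_supp // y_supp // mulr0 addr0.
move=> x /mapP[a]; rewrite mem_iota => a_range -> j j_out.
rewrite basisvE; last lia.
by have /negbTE-> : j != a :> nat by lia.
Qed.

Lemma square_shift_supp x y : supp 2 h.+1 (square_shift x y).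
Proof. by move=> j j_out; rewrite mxE ifN. Qed.

Lemma shift_mul_closed (U : {vspace V}) x y : unitv \in U -> (shift_span <= U)%VS ->
  x \in U -> y \in U -> shift_mul x y \in U.
Proof.
move=> eU shiftU xU yU; rewrite memvD ?memvB ?memvD ?memvZ //.
exact/(subvP shiftU)/shift_spanP/square_shift_supp.
Qed.

Definition starts_at i (t : V) := [/\ t 0 ord0 = 0, t 0 (inord i.+1) = 1 &
  forall j : 'I_N, ((0 < j <= i) || (h.+1 < j))%N -> t 0 j = 0].

Lemma starts_at_square i t : (i < h)%N -> starts_at i t -> starts_at i.+1 (shift_mul t t).
Proof.
move=> lt_ih [t0 t1 t_zero]; rewrite shift_mul_augmentation //; split.
- by rewrite mxE.
- by rewrite mxE inordK /= ?ifT ?inordK ?t1 ?mulr1 //; lia.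
move=> j j_range; rewrite mxE; case: ifP => // j_mid.
by rewrite t_zero ?mul0r // inordK; lia.
Qed.

Lemma supp_mem_of_starts (U : {vspace V}) :
  (forall i, (i <= h)%N -> exists2 t, t \in U & starts_at i t) ->
  forall v, supp 2 h.+1 v -> v \in U.
Proof.
move=> startsU.
suff lower_supp m : (m <= h)%N -> forall v, supp (h.+2 - m) h.+1 v -> v \in U.
  have -> : (2 = h.+2 - h)%N by lia.
  exact: lower_supp.
elim: m => [|m IHm] le_mh v v_supp.
  have -> : v = 0 by apply/rowP => j; rewrite mxE v_supp //; lia.
  exact: rpred0.
have [t tU [t0 t1 t_zero]] := startsU (h - m)%N (leq_subr _ _).
set c := v 0 (inord (h - m).+1).
rewrite -(subrK (c *: t) v) memvD ?memvZ //; apply: IHm; first lia.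
move=> j j_out; rewrite !mxE.
have [j_pivot | /eqP j_ne] := boolP (j == (h - m).+1 :> nat).
  have -> : j = inord (h - m).+1 by apply/val_inj; rewrite /= inordK; [exact/eqP | lia].
  by rewrite t1 mulr1 subrr.
have [j0 | j_gt0] := boolP (j == 0 :> nat).
  have -> : j = ord0 by exact/val_inj/eqP.
  rewrite t0 v_supp ?mulr0 ?subrr //=; lia.
rewrite v_supp; last lia.
by rewrite t_zero ?mulr0 ?subrr //; lia.
Qed.

Local Notation L S k := (Lspace shift_mul unitv S k).
Local Notation W S i := (words shift_mul unitv S i).

Lemma Lspace_shift_span_full S k :
  set_length shift_mul unitv S k -> (L S 1 + shift_span)%VS = fullv.
Proof.
case=> Lk_full _; apply/eqP; rewrite eqEsubv subvf -Lk_full /=.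
have L1_sub := subvP (addvSl (L S 1) shift_span).
have eL : unitv \in (L S 1 + shift_span)%VS.
  by apply/L1_sub/(words_Lspace (i := 0)); rewrite ?words0 ?mem_head.
apply: Lspace_closed_subv => // [s sS|u v]; last exact: shift_mul_closed (addvSr _ _).
by apply/L1_sub/(words_Lspace (i := 1)); rewrite ?words1.
Qed.

Lemma starts_in_Lspace1 S : (L S 1 + shift_span)%VS = fullv ->
  exists2 t, t \in L S 1 & starts_at 0 t.
Proof.
move=> full; have /memv_addP[t tL [w /shift_spanP w_supp e1]] :
  basisv 1 \in (L S 1 + shift_span)%VS by rewrite full memvf.
exists t => //; have tE k : t 0 k = basisv 1 0 k - w 0 k by rewrite e1 mxE addrK.
split=> [||j j_out]; rewrite tE w_supp ?subr0 ?basisvE ?inordK //=; last lia.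
by have /negbTE-> : j != 1 :> nat by lia.
Qed.

Lemma starts_at_Lspace_pow2 S t : t \in L S 1 -> starts_at 0 t ->
  forall i, (i <= h)%N -> exists2 t', t' \in L S (2 ^ i) & starts_at i t'.
Proof.
move=> tL t_starts; elim=> [|i IHi] le_ih; first by exists t.
have [t' t'L t'_starts] := IHi (ltnW le_ih).
exists (shift_mul t' t'); last exact: starts_at_square.
rewrite expnS mul2n -addnn Lspace_mul //.
- exact: shift_mul_bilinear.
- exact: shift_mul_unit.
Qed.

Lemma Lspace_pow2_full S : (L S 1 + shift_span)%VS = fullv -> L S (2 ^ h) = fullv.
Proof.
move=> full; have [t tL t_starts] := starts_in_Lspace1 full.
apply/eqP; rewrite eqEsubv subvf -full subv_add /=; apply/andP; split.
  by apply: Lspace_monotone; rewrite expn_gt0.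
apply/subvP => v /shift_spanP; apply: supp_mem_of_starts => i le_ih.
have [t' t'L t'_starts] := starts_at_Lspace_pow2 tL t_starts le_ih.
by exists t' => //; apply: subvP t'L; apply: Lspace_monotone; rewrite leq_pexp2l.
Qed.

Lemma shift_length_leq S k : set_length shift_mul unitv S k -> (k <= 2 ^ h)%N.
Proof.
move=> S_len; apply: (set_length_leq S_len).
exact: Lspace_pow2_full (Lspace_shift_span_full S_len).
Qed.

Definition long_gens : seq V := basisv 1 :: [seq basisv j | j <- iota h.+2 (n - h)].

Lemma Lspace_long_gens_full : L long_gens (2 ^ h) = fullv.
Proof.
apply: Lspace_pow2_full; apply/eqP; rewrite eqEsubv subvf; apply/subvP => v _.
rewrite (row_sum_delta v) rpred_sum // => j _; apply: memvZ.
have [j_mid | j_out] := boolP (2 <= j <= h.+1)%N.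
  apply/(subvP (addvSr _ _))/shift_spanP => k k_out; rewrite mxE.
  by have /negbTE-> : k != j by apply: contraNneq k_out => ->.
apply/(subvP (addvSl _ _)).
have [j0 | j_gt0] := boolP (j == 0 :> nat).
  have -> : j = ord0 by exact/val_inj/eqP.
  by apply: (words_Lspace (i := 0)); rewrite ?words0 ?mem_head.
apply: (words_Lspace (i := 1)); rewrite // words1 -[j]inord_val -/(basisv j).
have [j1 | j_gt1] := boolP (j == 1 :> nat); first by rewrite (eqP j1) mem_head.
by rewrite inE map_f ?orbT // mem_iota; have := ltn_ord j; lia.
Qed.

Definition vanish_below i (w : V) := ((0 < i)%N -> w 0 ord0 = 0) /\
  (forall p, (p <= h)%N -> (i < 2 ^ p)%N -> w 0 (inord p.+1) = 0).

Lemma words_long_gens_vanish i w : w \in W long_gens i -> vanish_below i w.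
Proof.
apply: words_ind => [|s|i1 i2 u v i1_gt0 i2_gt0 [u0 u_vanish] [v0 v_vanish]].
- by split=> // p le_ph _; rewrite unitvE inordK //; lia.
- rewrite inE => /predU1P[-> | /mapP[a]].
    split=> [_|[|p] le_ph //]; rewrite basisvE // inordK //; lia.
  rewrite mem_iota => a_range ->.
  split=> [_|p le_ph _]; rewrite basisvE ?inordK /=; try lia.
  - by have /negbTE-> : 0 != a by lia.
  - by have /negbTE-> : p.+1 != a by lia.
rewrite shift_mul_augmentation ?u0 ?v0 //; split=> [|p le_ph]; first by rewrite mxE.
rewrite mxE inordK /=; last lia.
case: p le_ph => [|p] le_ph; first by [].
rewrite expnS mul2n -addnn ifT; last lia.
move=> lt_sum; have [u_short | v_short] : (i1 < 2 ^ p \/ i2 < 2 ^ p)%N by lia.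
  by rewrite u_vanish ?mul0r //; lia.
by rewrite v_vanish ?mulr0 //; lia.
Qed.

Lemma Lspace_long_gens_vanish j v :
  (j < 2 ^ h)%N -> v \in L long_gens j -> v 0 (inord h.+1) = 0.
Proof.
move=> lt_j; rewrite LspaceE; move: v; apply: span_ind => [|a x y x0 y0|w].
- by rewrite mxE.
- by rewrite !mxE x0 y0 mulr0 addr0.
case/flatten_mapP=> i; rewrite mem_iota => le_ij /words_long_gens_vanish[_ w_vanish].
by apply: w_vanish => //; lia.
Qed.

Lemma long_gens_length : set_length shift_mul unitv long_gens (2 ^ h).
Proof.
split=> [|j lt_j full]; first exact: Lspace_long_gens_full.
have /eqP : basisv h.+1 0 (inord h.+1) = 0.
  by apply: (Lspace_long_gens_vanish lt_j); rewrite full memvf.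
by rewrite basisvE // inordK // eqxx oner_eq0.
Qed.

End ShiftAlgebra.

Theorem proposition3p8 (F : fieldType) (n h : nat) :
  (2 <= n)%N -> (h <= n - 2)%N ->
  exists (mul : 'rV[F]_n -> 'rV[F]_n -> 'rV[F]_n) (e : 'rV[F]_n),
    [/\ bilinear_mul mul, is_unit_elt mul e,
        (exists S : seq 'rV[F]_n, set_length mul e S (2 ^ h)%N) &
        (forall (S : seq 'rV[F]_n) (k : nat), set_length mul e S k -> (k <= 2 ^ h)%N)].
Proof.
case: n => [|[|n]] // _; rewrite !subSS subn0 => le_hn.
exists (@shift_mul F n h), (@unitv F n); split.
- exact: shift_mul_bilinear.
- exact: shift_mul_unit.
- by exists (long_gens F n h); exact: long_gens_length.
- by move=> S k; apply: shift_length_leq.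
Qed.
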